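(* Let $\mathcal X,\mathcal Y$ be finite-dimensional Hilbert spaces, let $K\subset\mathcal Y$ be a closed convex cone with polar cone $K^{\circ}$, and let $g:\mathcal X\to\mathcal Y$ be a continuous mapping such that the set-valued mapping $\mathcal F_g:x\mapsto K-g(x)$ is graph-convex. Then the function $$\theta(x)=\tfrac12\|\Pi_{K^{\circ}}(g(x))\|^2$$ is convex on $\mathcal X$.
   Context: $\Pi_{C}$ denotes the metric projection onto a closed convex set $C$, and $K^{\circ}=\{v\in\mathcal Y:\langle v,k\rangle\le 0\ \forall k\in K\}$. The mapping $\mathcal F_g:x\mapsto K-g(x)$ is called graph-convex if its graph $\{(x,y)\in\mathcal X\times\mathcal Y: g(x)+y\in K\}$ is a convex set. (One has $\theta(x)=\min_z\{\tfrac12\|z\|^2: g(x)+z\in K\}=\tfrac12\|g(x)-\Pi_K(g(x))\|^2$.) *)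

From HB Require Import structures.
From mathcomp Require Import all_boot all_order all_algebra.
From mathcomp Require Import all_classical all_reals all_analysis.
Set Implicit Arguments. Unset Strict Implicit. Unset Printing Implicit Defensive.
Import numFieldNormedType.Exports.
Import Order.TTheory GRing.Theory Num.Theory.
Local Open Scope classical_set_scope.
Local Open Scope ring_scope.

(* Finite-dimensional real Hilbert spaces are modelled as 'rV[R]_n with the
   standard Euclidean inner product. *)
Definition dotv (R : realType) (n : nat) (u v : 'rV[R]_n) : R := (u *m v^T) 0 0.
Definition enorm (R : realType) (n : nat) (u : 'rV[R]_n) : R := Num.sqrt (dotv u u).

Definition is_metric_proj (R : realType) (n : nat) (C : set 'rV[R]_n) (y p : 'rV[R]_n) :=
  C p /\ forall c, C c -> enorm (y - p) <= enorm (y - c).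

(* metric projection Pi_C(y) (well-defined, by uniqueness, for C closed convex nonempty) *)
Definition metric_proj (R : realType) (n : nat) (C : set 'rV[R]_n) (y : 'rV[R]_n) : 'rV[R]_n :=
  xget 0 [set p | is_metric_proj C y p].

Definition polar_cone (R : realType) (n : nat) (K : set 'rV[R]_n) : set 'rV[R]_n :=
  [set v | forall k, K k -> dotv v k <= 0].

Definition convex_set_in (R : realType) (V : lmodType R) (C : set V) :=
  forall x y (t : R), C x -> C y -> 0 <= t <= 1 -> C (t *: x + (1 - t) *: y).

Definition is_convex_cone (R : realType) (n : nat) (K : set 'rV[R]_n) :=
  K 0 /\ (forall (t : R) k, 0 <= t -> K k -> K (t *: k)) /\ convex_set_in K.

Definition convex_fun_on (R : realType) (n : nat) (f : 'rV[R]_n -> R) :=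
  forall x y (t : R), 0 <= t <= 1 ->
    f (t *: x + (1 - t) *: y) <= t * f x + (1 - t) * f y.

(* graph of F_g : x |-> K - g(x), as a subset of X * Y *)
Definition graph_Fg (R : realType) (n m : nat) (K : set 'rV[R]_m) (g : 'rV[R]_n -> 'rV[R]_m)
  : set ('rV[R]_n * 'rV[R]_m) := [set xy | K (g xy.1 + xy.2)].

From HB Require Import structures.
From mathcomp Require Import all_boot all_order all_algebra.
From mathcomp Require Import all_classical all_reals all_analysis.
From mathcomp Require Import ring lra.
Import numFieldNormedType.Exports.
Import Order.TTheory GRing.Theory Num.Theory.
Local Open Scope classical_set_scope.
Local Open Scope ring_scope.

(* Moreau decomposition: if p is a nearest point of the cone K to y, the
   optimality conditions say that y - p lies in the polar cone K° and is
   orthogonal to p. Hence y - p is the nearest point of K° to y, and Pythagoras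
   in y = (y - p) + p and in y = (y - q) + q, q := Pi_K°(y), gives
   |Pi_K°(y)| = |y - p| = dist(y, K), so theta(x) = dist(g(x), K)^2 / 2.
   If p_i is nearest to g(x_i), then (x_i, p_i - g(x_i)) lies in the graph of
   F_g, hence so does the convex combination (x, z) of these two points, i.e.
   g(x) + z lies in K. Thus dist(g(x), K)^2 <= |z|^2, which by convexity of
   |.|^2 is at most the convex combination of the |p_i - g(x_i)|^2. *)

Section Euclidean.
Context {R : realType} {m : nat}.
Implicit Types (u v w : 'rV[R]_m).

Lemma dotvE u v : dotv u v = \sum_j u 0 j * v 0 j.
Proof. by rewrite /dotv !mxE; apply: eq_bigr => j _; rewrite mxE. Qed.

Lemma dotvC u v : dotv u v = dotv v u.
Proof. by rewrite !dotvE; apply: eq_bigr => j _; rewrite mulrC. Qed.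

Lemma dotvDl u v w : dotv (u + v) w = dotv u w + dotv v w.
Proof. by rewrite /dotv mulmxDl mxE. Qed.

Lemma dotvZl (a : R) u v : dotv (a *: u) v = a * dotv u v.
Proof. by rewrite /dotv -scalemxAl mxE. Qed.

Lemma dotvNl u v : dotv (- u) v = - dotv u v.
Proof. by rewrite -scaleN1r dotvZl mulN1r. Qed.

Lemma dotvDr u v w : dotv u (v + w) = dotv u v + dotv u w.
Proof. by rewrite dotvC dotvDl !(dotvC u). Qed.

Lemma dotvZr (a : R) u v : dotv u (a *: v) = a * dotv u v.
Proof. by rewrite dotvC dotvZl dotvC. Qed.

Lemma dotvNr u v : dotv u (- v) = - dotv u v.
Proof. by rewrite dotvC dotvNl dotvC. Qed.

Lemma dotv0l v : dotv 0 v = 0.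
Proof. by rewrite /dotv mul0mx mxE. Qed.

Lemma dotv_ge0 u : 0 <= dotv u u.
Proof. by rewrite dotvE; apply: sumr_ge0 => j _; rewrite -expr2 sqr_ge0. Qed.

Lemma dotv_sqrD u v : dotv (u + v) (u + v) = dotv u u + 2 * dotv u v + dotv v v.
Proof. by rewrite !dotvDl !dotvDr (dotvC v u); ring. Qed.

Lemma enorm_ge0 u : 0 <= enorm u.
Proof. exact: sqrtr_ge0. Qed.

Lemma enorm_sqr u : enorm u ^+ 2 = dotv u u.
Proof. by rewrite /enorm sqr_sqrtr // dotv_ge0. Qed.

Lemma enorm_le u v : (enorm u <= enorm v) = (dotv u u <= dotv v v).
Proof. by rewrite /enorm ler_sqrt // dotv_ge0. Qed.

Lemma enormN u : enorm (- u) = enorm u.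
Proof. by rewrite /enorm dotvNl dotvNr opprK. Qed.

Lemma coord_le_enorm u j : `|u 0 j| <= enorm u.
Proof.
rewrite -sqrtr_sqr /enorm ler_sqrt ?dotv_ge0 // dotvE (bigD1 j) //= expr2 lerDl.
by apply: sumr_ge0 => i _; rewrite -expr2 sqr_ge0.
Qed.

Lemma mx_norm_le_enorm u : `|u| <= enorm u.
Proof.
rewrite /Num.norm /= mx_normrE.
apply: bigmax_le => [|[i j] _ /=]; first exact: enorm_ge0.
by rewrite (ord1 i) coord_le_enorm.
Qed.

Lemma continuous_enorm : continuous (@enorm R m).
Proof.
have dot_cont : continuous (fun u : 'rV[R]_m => dotv u u).
  rewrite (_ : (fun u => dotv u u) = \sum_j (fun u : 'rV[R]_m => u 0 j * u 0 j)).
    apply: (big_ind (fun h : 'rV[R]_m -> R => continuous h))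
      => [u|f h fc hc u|j _ u].
    - exact: cst_continuous.
    - exact: continuousD (fc u) (hc u).
    - have cj : continuous (fun u : 'rV[R]_m => u 0 j) := @coord_continuous _ _ _ 0 j.
      exact: continuousM (cj u) (cj u).
  by apply/funext => u; rewrite fct_sumE dotvE.
by move=> u; exact: (continuous_comp (dot_cont u) (@sqrt_continuous R _)).
Qed.

Lemma convex_enorm_sqr : convex_fun_on (fun u : 'rV[R]_m => enorm u ^+ 2).
Proof.
move=> u v t /andP[t0 t1]; rewrite !enorm_sqr -subr_ge0.
have -> : t * dotv u u + (1 - t) * dotv v v
          - dotv (t *: u + (1 - t) *: v) (t *: u + (1 - t) *: v)
        = t * (1 - t) * dotv (u - v) (u - v).
  by rewrite !dotv_sqrD !dotvZl !dotvZr !dotvNl !dotvNr; ring.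
by rewrite !mulr_ge0 ?dotv_ge0 ?subr_ge0.
Qed.

End Euclidean.

Section MetricProjection.
Context {R : realType} {m : nat}.
Implicit Types (C K : set 'rV[R]_m) (y p v : 'rV[R]_m).

Lemma metric_proj_exists {C} y :
  closed C -> C !=set0 -> exists p, is_metric_proj C y p.
Proof.
move=> Ccl [c0 Cc0].
pose f k := enorm (y - k); set r := f c0.
have sub_cont : continuous (fun k : 'rV[R]_m => y - k).
  by move=> k; apply: continuousB; [exact: cst_continuous | exact: cvg_id].
have f_cont : continuous f.
  by move=> k; exact: (continuous_comp (sub_cont k) (@continuous_enorm R m _)).
pose A := C `&` [set k | f k <= r].
have A0 : A !=set0 by exists c0; split => //=.
have Acl : closed A.
  apply: closedI => //; apply: (@preimage_closed _ _ f [set x | x <= r]).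
    by move=> k _; exact: f_cont.
  exact: closed_le.
have Abd : bounded_set A.
  exists (`|y| + r); split; first exact: num_real.
  move=> M M_gt k [_ fk] /=.
  rewrite -[k](subKr y); apply: le_trans (ler_normB _ _) _.
  apply: le_trans (ltW M_gt); rewrite lerD2l.
  exact: le_trans (mx_norm_le_enorm _) fk.
have Acp : compact A := bounded_closed_compact Abd Acl.
have [c] := compact_EVT_min A0 Acp (continuous_subspaceT f_cont).
rewrite inE => -[Cc fc] cmin; exists c; split => // k Ck.
have [fk|fk] := leP (f k) r; first by apply: cmin; rewrite inE.
exact: le_trans fc (ltW fk).
Qed.

Lemma metric_projP {C y} : (exists p, is_metric_proj C y p) ->
  is_metric_proj C y (metric_proj C y).
Proof. exact: xgetPex. Qed.

Lemma metric_proj_variation {C y p} v (t : R) : is_metric_proj C y p ->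
  C (p - t *: v) -> 0 <= 2 * t * dotv (y - p) v + t ^+ 2 * dotv v v.
Proof.
move=> [_ pmin] Cc; have := pmin _ Cc.
rewrite enorm_le (_ : y - (p - t *: v) = y - p + t *: v); last first.
  by rewrite opprB addrA addrAC.
by rewrite (dotv_sqrD (y - p)) !dotvZl !dotvZr -subr_ge0 => h; lra.
Qed.

Lemma quadratic_slope_ge0 (a b : R) :
  (forall s, 0 < s <= 1 -> 0 <= 2 * s * a + s ^+ 2 * b) -> 0 <= a.
Proof.
move=> H; rewrite leNgt; apply/negP => a_lt0.
have d_gt0 : 0 < `|b| - a by have := normr_ge0 b; lra.
(* chosen so that s * (|b| - a) = -a, whence 2 s a + s^2 |b| = s a (1 + s) < 0 *)
set s := - a / (`|b| - a).
have s_gt0 : 0 < s by rewrite divr_gt0 // oppr_gt0.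
have s_le1 : s <= 1 by rewrite ler_pdivrMr // mul1r lerDr.
have sd : s * (`|b| - a) = - a by rewrite /s mulrVK // unitfE gt_eqF.
have := H s; rewrite s_gt0 s_le1 => /(_ isT) Hs.
have bb : s ^+ 2 * b <= s ^+ 2 * `|b| by rewrite ler_wpM2l ?sqr_ge0 ?ler_norm.
have sb : s ^+ 2 * `|b| = s * (- a + s * a) by rewrite -sd; ring.
have sa : s * a < 0 by rewrite pmulr_rlt0.
have ssa : s * (s * a) < 0 by rewrite pmulr_rlt0.
have : 2 * s * a + s ^+ 2 * `|b| = s * a + s * (s * a) by rewrite sb; ring.
lra.
Qed.

Lemma convex_coneD {K a b} : is_convex_cone K -> K a -> K b -> K (a + b).
Proof.
move=> [_ [Ks Kc]] Ka Kb.
have := Kc (2 *: a) (2 *: b) 2^-1 (Ks _ _ (ler0n _ 2) Ka) (Ks _ _ (ler0n _ 2) Kb).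
have -> : (1 - 2^-1 : R) = 2^-1 by field.
rewrite !scalerA mulVf ?pnatr_eq0 // !scale1r; apply.
by rewrite invr_ge0 /= invf_le1 //; lra.
Qed.

Lemma polar_cone_convex_cone K : is_convex_cone (polar_cone K).
Proof.
split; first by move=> k _; rewrite dotv0l.
split; first by move=> t v t0 Pv k Kk; rewrite dotvZl mulr_ge0_le0 // Pv.
move=> a b t Pa Pb /andP[t0 t1] k Kk.
rewrite dotvDl !dotvZl.
have : t * dotv a k <= 0 by rewrite mulr_ge0_le0 ?Pa.
have : (1 - t) * dotv b k <= 0 by rewrite mulr_ge0_le0 ?Pb ?subr_ge0.
lra.
Qed.

Section Cone.
Context {K : set 'rV[R]_m} {y p : 'rV[R]_m}.
Hypotheses (hK : is_convex_cone K) (hp : is_metric_proj K y p).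

Lemma metric_proj_cone_orth : dotv (y - p) p = 0.
Proof.
have [_ [Ks _]] := hK.
have var t : t <= 1 -> 0 <= 2 * t * dotv (y - p) p + t ^+ 2 * dotv p p.
  move=> t1; apply: metric_proj_variation hp _.
  by rewrite -[X in X - _]scale1r -scalerBl; apply: (Ks _ _ _ hp.1); rewrite subr_ge0.
apply/eqP; rewrite eq_le; apply/andP; split.
  rewrite -oppr_ge0; apply: (@quadratic_slope_ge0 _ (dotv p p)) => s /andP[s0 _].
  by have := var (- s); rewrite sqrrN; lra.
by apply: (@quadratic_slope_ge0 _ (dotv p p)) => s /andP[_ s1]; apply: var.
Qed.

Lemma metric_proj_cone_polar : polar_cone K (y - p).
Proof.
move=> k Kk; have [_ [Ks _]] := hK.
rewrite -oppr_ge0; apply: (@quadratic_slope_ge0 _ (dotv k k)) => s /andP[s0 _].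
have Kpk : K (p + s *: k) := convex_coneD hK hp.1 (Ks _ _ (ltW s0) Kk).
have := metric_proj_variation (- k) s hp.
by rewrite scalerN opprK dotvNr dotvNl dotvNr opprK; apply.
Qed.

Lemma metric_proj_cone_pythagoras :
  enorm y ^+ 2 = enorm (y - p) ^+ 2 + enorm p ^+ 2.
Proof.
rewrite !enorm_sqr -[in LHS](subrK p y) (dotv_sqrD (y - p)).
by rewrite metric_proj_cone_orth mulr0 addr0.
Qed.

Lemma is_metric_proj_polar : is_metric_proj (polar_cone K) y (y - p).
Proof.
split; first exact: metric_proj_cone_polar.
move=> c Pc; rewrite subKr enorm_le.
rewrite (_ : y - c = p + (y - p - c)); last by rewrite addrA [p + _]addrC subrK.
rewrite dotv_sqrD dotvDr dotvNr (dotvC p (y - p)) metric_proj_cone_orth.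
have := Pc p hp.1; rewrite dotvC; have := dotv_ge0 (y - p - c); lra.
Qed.

End Cone.

Lemma enorm_metric_proj_polar K y p : is_convex_cone K -> is_metric_proj K y p ->
  enorm (metric_proj (polar_cone K) y) ^+ 2 = enorm (y - p) ^+ 2.
Proof.
move=> hK hp.
have hq := metric_projP (ex_intro _ _ (is_metric_proj_polar hK hp)).
set q := metric_proj _ y in hq *.
have dist_q : enorm (y - q) = enorm p.
  apply/eqP; rewrite eq_le; apply/andP; split.
    by have := hq.2 _ (metric_proj_cone_polar hK hp); rewrite subKr.
  by have := (is_metric_proj_polar hK hp).2 _ hq.1; rewrite subKr.
have := metric_proj_cone_pythagoras hK hp.
have := metric_proj_cone_pythagoras (polar_cone_convex_cone K) hq.
by rewrite dist_q; lra.
Qed.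

End MetricProjection.

Lemma convex_fun_onZ (R : realType) (n : nat) (c : R) (f : 'rV[R]_n -> R) :
  0 <= c -> convex_fun_on f -> convex_fun_on (fun x => c * f x).
Proof.
move=> c0 hf x y t t01.
have -> : t * (c * f x) + (1 - t) * (c * f y) = c * (t * f x + (1 - t) * f y).
  by ring.
by apply: ler_wpM2l => //; apply: hf.
Qed.

Lemma convex_sqr_dist_graph (R : realType) (n m : nat) (K : set 'rV[R]_m)
    (g : 'rV[R]_n -> 'rV[R]_m) :
  closed K -> K !=set0 -> convex_set_in (graph_Fg K g) ->
  convex_fun_on (fun x => enorm (g x - metric_proj K (g x)) ^+ 2).
Proof.
move=> Kcl K0 Gc x1 x2 t t01 /=.
have proj y := metric_projP (metric_proj_exists y Kcl K0).
have graph_proj x : graph_Fg K g (x, metric_proj K (g x) - g x).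
  by rewrite /graph_Fg /= addrC subrK; exact: (proj _).1.
have := Gc _ _ _ (graph_proj x1) (graph_proj x2) t01; rewrite /graph_Fg /=.
set x := _ *: x1 + _; set z := _ *: (_ - g x1) + _ => Kz.
have dist_le : enorm (g x - metric_proj K (g x)) <= enorm z.
  by have := (proj (g x)).2 _ Kz; rewrite opprD addrA subrr add0r enormN.
apply: le_trans (lerXn2r 2 _ _ dist_le) _; rewrite ?nnegrE ?enorm_ge0 //.
apply: le_trans (convex_enorm_sqr _ _ _ t01) _.
by rewrite -(enormN (_ - g x1)) -(enormN (_ - g x2)) !opprB.
Qed.

Theorem proposition2p1 (R : realType) (n m : nat) (K : set 'rV[R]_m)
    (g : 'rV[R]_n -> 'rV[R]_m) :
  closed K -> is_convex_cone K -> continuous g ->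
  convex_set_in (graph_Fg K g) ->
  convex_fun_on (fun x => 2^-1 * enorm (metric_proj (polar_cone K) (g x)) ^+ 2).
Proof.
move=> Kcl hK _ Gc.
have K0 : K !=set0 by exists 0; case: hK.
rewrite (_ : (fun x => _) = fun x => 2^-1 * enorm (g x - metric_proj K (g x)) ^+ 2).
  by apply: convex_fun_onZ; [rewrite invr_ge0 | exact: convex_sqr_dist_graph].
apply/funext => x; congr (_ * _).
exact: enorm_metric_proj_polar hK (metric_projP (metric_proj_exists _ Kcl K0)).
Qed.
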